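(* Let $d\ge 2$ and let $\{\tau_e: e\in\mathcal E^d\}$ be i.i.d. non-negative edge weights on the nearest-neighbor edges $\mathcal E^d$ of $\mathbb Z^d$, satisfying the standing assumption described in the context. Fix $x\in\mathbb Z^d$ and let $\pi^{(x)}$ be the distinguished geodesic from $0$ to $x$. Then for any $t>0$ and any $e\in\mathcal E^d$, $$\mathbb P\big(\tau_e\le t \,\big|\, e\in \pi^{(x)}\big)\ \ge\ \mathbb P(\tau_e\le t).$$
   Context: Setting: $d\ge2$; $\mathcal E^d$ is the set of nearest-neighbor edges of $\mathbb Z^d$; $\{\tau_e\}$ are i.i.d. non-negative random variables with law $\mu$, distribution function $F$, and essential infimum $r$. Standing assumption: $F(r)<p_c(d)$ if $r=0$ and $F(r)<\vec p_c(d)$ if $r>0$, where $p_c(d)$ is the critical probability of Bernoulli bond percolation on $\mathbb Z^d$ and $\vec p_c(d)$ that of oriented bond percolation on $\mathbb Z^d$. The passage time of a path $\gamma$ is $T(\gamma)=\sum_{e\in\gamma}\tau_e$, and $T(x,y)=\inf T(\gamma)$ over vertex self-avoiding nearest-neighbor paths from $x$ to $y$. A geodesic from $x$ to $y$ is a vertex self-avoiding path $\gamma$ from $x$ to $y$ with $T(\gamma)=T(x,y)$. Fix an arbitrary deterministic ordering of all finite vertex self-avoiding lattice paths; $\pi^{(x)}$ denotes the first geodesic from $0$ to $x$ in this ordering. *)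

From HB Require Import structures.
From mathcomp Require Import all_boot all_order all_algebra.
From mathcomp Require Import finmap.
From mathcomp Require Import all_classical all_reals all_analysis.
Set Implicit Arguments. Unset Strict Implicit. Unset Printing Implicit Defensive.
Import Order.TTheory GRing.Theory Num.Theory.
Local Open Scope classical_set_scope.
Local Open Scope ring_scope.

Definition vertex (n : nat) := 'rV[int]_n.
Definition origin (n : nat) : vertex n := 0.
Definition unitv (n : nat) (i : 'I_n) : vertex n := delta_mx 0 i.

(* The nearest-neighbour edge {v, v + e_i} is encoded (bijectively) by (v, i). *)
Definition edge (n : nat) := (vertex n * 'I_n)%type.

(* A lattice path = starting vertex + list of unit steps (i, +) or (i, -). *)
Definition step (n : nat) := ('I_n * bool)%type.
Definition lpath (n : nat) := (vertex n * seq (step n))%type.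

Section Paths.
Variable n : nat.
Implicit Types (v : vertex n) (s : step n) (p : lpath n).

Definition step_to v s : vertex n :=
  if s.2 then v + unitv s.1 else v - unitv s.1.
Definition step_edge v s : edge n :=
  if s.2 then (v, s.1) else (v - unitv s.1, s.1).
Definition traj p : seq (vertex n) := p.1 :: scanl step_to p.1 p.2.
Definition pstart p : vertex n := p.1.
Definition pend p : vertex n := last p.1 (scanl step_to p.1 p.2).
Definition path_edges p : seq (edge n) :=
  [seq step_edge vs.1 vs.2 | vs <- zip (traj p) p.2].
Definition self_avoiding p : bool := uniq (traj p).
Definition saw_from_to (x y : vertex n) p : Prop :=
  [/\ pstart p = x, pend p = y & self_avoiding p].
End Paths.

Section FPP.
Context {R : realType} (n : nat).
Implicit Types (tau : edge n -> R) (p : lpath n).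

Definition passage_time tau p : R := \sum_(e <- path_edges p) tau e.
Definition fpp_time tau (x y : vertex n) : R :=
  inf [set passage_time tau p | p in [set p | saw_from_to x y p]].
Definition geodesic tau (x y : vertex n) p : Prop :=
  saw_from_to x y p /\ passage_time tau p = fpp_time tau x y.
(* [rank] encodes the fixed deterministic ordering of finite self-avoiding
   paths; [first_geodesic rank tau x p] says that p is pi^(x). *)
Definition first_geodesic (rank : lpath n -> nat) tau (x : vertex n) p : Prop :=
  geodesic tau (origin n) x p /\
  forall q, geodesic tau (origin n) x q -> (rank p <= rank q)%N.
End FPP.

Section Indep.
Context {R : realType} {d : measure_display} {T : measurableType d}.
Context (P : probability T R) {I : choiceType}.

Definition iid_indep (X : I -> T -> R) : Prop :=
  forall (S : {fset I}) (B : I -> set R), (forall i, measurable (B i)) ->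
    P (\bigcap_(i in [set` S]) (X i @^-1` B i)) =
    (\prod_(i <- S) P (X i @^-1` B i))%E.

Definition events_indep (A : I -> set T) : Prop :=
  forall (S : {fset I}),
    P (\bigcap_(i in [set` S]) A i) = (\prod_(i <- S) P (A i))%E.
End Indep.

Section Perc.
Context {R : realType} (n : nat).
Implicit Types (w : edge n -> bool) (p : lpath n).

Definition open_path w p : bool := all w (path_edges p).
Definition oriented p : bool := all (fun s : step n => s.2) p.2.

Definition percolates w : Prop :=
  infinite_set [set y | exists p, [/\ pstart p = origin n, pend p = y & open_path w p]].
Definition oriented_percolates w : Prop :=
  infinite_set [set y | exists p,
    [/\ pstart p = origin n, pend p = y, oriented p & open_path w p]].

Definition bernoulli_family {d : measure_display} {T : measurableType d}
  (Q : probability T R) (w : edge n -> T -> bool) (q : R) : Prop :=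
  [/\ forall e, measurable [set t | w e t],
      forall e, Q [set t | w e t] = q%:E &
      events_indep Q (fun e => [set t | w e t])].

Definition no_percolation (q : R) : Prop :=
  forall (d : measure_display) (T : measurableType d) (Q : probability T R)
         (w : edge n -> T -> bool),
    bernoulli_family Q w q -> Q [set t | percolates (w^~ t)] = 0%E.
Definition no_oriented_percolation (q : R) : Prop :=
  forall (d : measure_display) (T : measurableType d) (Q : probability T R)
         (w : edge n -> T -> bool),
    bernoulli_family Q w q -> Q [set t | oriented_percolates (w^~ t)] = 0%E.

Definition p_c : R := sup [set q : R | 0 <= q <= 1 /\ no_percolation q].
Definition vec_p_c : R := sup [set q : R | 0 <= q <= 1 /\ no_oriented_percolation q].
End Perc.

Section Law.
Context {R : realType} (mu : probability R R).
Definition distF (t : R) : \bar R := mu [set x | x <= t].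
Definition ess_inf_law : R := sup [set s : R | mu [set x | x < s] = 0%E].
End Law.

From HB Require Import structures.
From mathcomp Require Import all_boot all_order all_algebra.
From mathcomp Require Import finmap.
From mathcomp Require Import all_classical all_reals all_analysis.
From mathcomp Require Import lra.
Set Implicit Arguments. Unset Strict Implicit. Unset Printing Implicit Defensive.
Import Order.TTheory GRing.Theory Num.Theory.
Local Open Scope classical_set_scope.
Local Open Scope ring_scope.

(* Let G = {tau_e <= t}, let A = {e in pi^(x)}, and let B be the event A computed
   in the environment where tau_e is replaced by the constant t.  B depends only on
   the weights of the edges other than e, so it is independent of G.  Lowering the
   weight of an edge of the first geodesic keeps it the first geodesic: a competing
   self-avoiding path uses that edge at most once, so it gains at most as much.
   Hence G ∩ B ⊆ A and A \ G ⊆ B, which give P(G ∩ A) >= P(G) P(B) and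
   P(A) <= P(G ∩ A) + (1 - P(G)) P(B); together, P(G ∩ A) >= P(G) P(A). *)

Section SelfAvoidingPaths.
Variable n : nat.
Implicit Types (v : vertex n) (s : step n) (f : edge n) (p : lpath n).

Definition edge_ends f : seq (vertex n) := [:: f.1; f.1 + unitv f.2].

Lemma traj_cons v s r : traj (v, s :: r) = v :: traj (step_to v s, r).
Proof. by []. Qed.

Lemma path_edges_cons v s r :
  path_edges (v, s :: r) = step_edge v s :: path_edges (step_to v s, r).
Proof. by []. Qed.

Lemma step_edge_ends v s : edge_ends (step_edge v s) =i [:: v; step_to v s].
Proof.
case: s => i [] u; rewrite /edge_ends /step_edge /step_to //= subrK.
by rewrite !inE orbC.
Qed.

Lemma path_edges_ends v r f :
  f \in path_edges (v, r) -> {subset edge_ends f <= traj (v, r)}.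
Proof.
elim: r v => [|s r IH] v //; rewrite path_edges_cons traj_cons in_cons.
case/orP => [/eqP-> u | /IH sub u /sub uin]; last by rewrite in_cons uin orbT.
rewrite step_edge_ends !in_cons orbF => /orP[/eqP->|/eqP->]; first by rewrite eqxx.
by apply/orP; right; exact: mem_head.
Qed.

Lemma path_edges_uniq p : self_avoiding p -> uniq (path_edges p).
Proof.
case: p => v r; rewrite /self_avoiding.
elim: r v => [|s r IH] v //; rewrite traj_cons path_edges_cons /= => /andP[vr sa].
rewrite IH // andbT; apply: contra vr => /path_edges_ends; apply.
by rewrite step_edge_ends inE eqxx.
Qed.

End SelfAvoidingPaths.

Section Geodesics.
Variables (R : realType) (n : nat).
Implicit Types (sg : edge n -> R) (r : R) (e f : edge n) (p q : lpath n).

Definition set_weight sg e r : edge n -> R :=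
  fun f => if f == e then r else sg f.

Lemma set_weight_at sg e r : set_weight sg e r e = r.
Proof. by rewrite /set_weight eqxx. Qed.

Lemma set_weight_off sg e r f : f != e -> set_weight sg e r f = sg f.
Proof. by rewrite /set_weight => /negbTE->. Qed.

Lemma set_weight_ge0 sg e r f :
  (forall f, 0 <= sg f) -> 0 <= r -> 0 <= set_weight sg e r f.
Proof. by rewrite /set_weight; case: eqP. Qed.

Definition on_first_geodesic (rank : lpath n -> nat) sg (x : vertex n) e :=
  exists p, first_geodesic rank sg x p /\ e \in path_edges p.

Lemma geodesicP sg x y p : (forall f, 0 <= sg f) ->
  geodesic sg x y p <-> saw_from_to x y p /\
    forall q, saw_from_to x y q -> passage_time sg p <= passage_time sg q.
Proof.
move=> sg_ge0.
have lbS : has_lbound [set passage_time sg q | q in [set q | saw_from_to x y q]].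
  by exists 0 => _ [r _ <-]; apply: sumr_ge0.
split=> [[sp ->] | [sp minp]].
  by split=> // q sq; apply: ge_inf lbS _ _; exists q.
split=> //; apply/eqP; rewrite eq_le; apply/andP; split.
  by apply: lb_le_inf; [exists (passage_time sg p), p | move=> _ [q sq <-]; apply: minp].
by apply: ge_inf lbS _ _; exists p.
Qed.

Lemma sum_weights_off_edge sg sg' e (s : seq (edge n)) :
  (forall f, f != e -> sg' f = sg f) ->
  \sum_(f <- s) sg f = \sum_(f <- s) sg' f + (sg e - sg' e) * (count_mem e s)%:R.
Proof.
move=> sg'E; elim: s => [|f s IH]; first by rewrite !big_nil mulr0 addr0.
rewrite !big_cons IH /= eq_sym.
by have [->|/sg'E->] := eqVneq f e; rewrite natrD /= ?mulr1n ?mulr0n; lra.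
Qed.

Lemma passage_time_off_edge sg sg' e p :
  (forall f, f != e -> sg' f = sg f) -> self_avoiding p ->
  passage_time sg p = passage_time sg' p + (sg e - sg' e) * (e \in path_edges p)%:R.
Proof.
move=> sg'E sp; rewrite /passage_time (sum_weights_off_edge _ sg'E).
by rewrite count_uniq_mem ?path_edges_uniq.
Qed.

Lemma first_geodesic_lower_weight rank sg sg' e x p :
  (forall f, 0 <= sg f) -> (forall f, 0 <= sg' f) ->
  (forall f, f != e -> sg' f = sg f) -> sg' e <= sg e ->
  first_geodesic rank sg x p -> e \in path_edges p -> first_geodesic rank sg' x p.
Proof.
move=> sg_ge0 sg'_ge0 sg'E le_e [geo_p min_p] ep.
have [sp tp_min] := (geodesicP _ _ _ sg_ge0).1 geo_p.
have gap q : saw_from_to (origin n) x q ->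
    passage_time sg' p - passage_time sg' q <= passage_time sg p - passage_time sg q.
  move=> [_ _ sq]; have [_ _ sap] := sp.
  rewrite (passage_time_off_edge sg'E sap) (passage_time_off_edge sg'E sq) ep.
  by case: (e \in _); rewrite /= ?mulr1n ?mulr0n; lra.
split.
  apply/geodesicP => //; split=> // q sq.
  by have := gap q sq; have := tp_min q sq; lra.
move=> q /geodesicP-/(_ sg'_ge0)[sq tq_min]; apply: min_p; apply/geodesicP => //.
split=> // q' sq'; have := gap q sq; have := tq_min p sp; have := tp_min q' sq'; lra.
Qed.

End Geodesics.

Section CountableMeasurable.
Context d (T : measurableType d) (I : countType).
Implicit Types (D : set I) (F : I -> set T).

Lemma countable_bigcup_measurable D F :
  (forall i, D i -> measurable (F i)) -> measurable (\bigcup_(i in D) F i).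
Proof.
move=> mF; rewrite bigcup_mkcond.
apply: countable_bigcupT_measurable => [|i]; first exact: countableP.
by case: ifPn => // /set_mem /mF.
Qed.

Lemma countable_bigcap_measurable D F :
  (forall i, D i -> measurable (F i)) -> measurable (\bigcap_(i in D) F i).
Proof.
move=> mF; rewrite -[X in measurable X]setCK setC_bigcap; apply: measurableC.
by apply: countable_bigcup_measurable => i /mF /measurableC.
Qed.

End CountableMeasurable.

Section FirstGeodesicEvent.
Context (R : realType) (n : nat) d (T : measurableType d).
Variables (env : edge n -> T -> R) (rank : lpath n -> nat) (x : vertex n).
Hypotheses (env_meas : forall f, measurable_fun setT (env f))
  (env_ge0 : forall f w, 0 <= env f w).

Let saw (p : lpath n) := saw_from_to (origin n) x p.

Definition minimal_path_event (p : lpath n) : set T :=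
  \bigcap_(q in saw) [set w | passage_time (env^~ w) p <= passage_time (env^~ w) q].

Lemma measurable_minimal_path_event p : measurable (minimal_path_event p).
Proof.
apply: countable_bigcap_measurable => q _; rewrite -[X in measurable X]setTI.
by apply: measurable_fun_le => //; apply: measurable_sum.
Qed.

Lemma on_first_geodesic_eventE e :
  [set w | on_first_geodesic rank (env^~ w) x e] =
  \bigcup_(p in [set p | saw p /\ e \in path_edges p])
    (minimal_path_event p `&`
     \bigcap_(q in [set q | saw q /\ (rank q < rank p)%N]) ~` minimal_path_event q).
Proof.
have geoP w p : geodesic (env^~ w) (origin n) x p <-> saw p /\ minimal_path_event p w.
  by rewrite geodesicP //; split=> -[sp minp]; split=> // q; apply: minp.
apply/seteqP; split=> w /=.
  move=> [p [[/geoP[sp minp] first_p] ep]]; exists p => //; split=> // q [sq lt_qp] minq.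
  by move: (first_p q (proj2 (geoP w q) (conj sq minq))); rewrite leqNgt lt_qp.
move=> [p [sp ep] [minp not_before]]; exists p; split=> //; split; first exact/geoP.
move=> q /geoP[sq minq]; rewrite leqNgt; apply/negP => lt_qp.
exact: (not_before q (conj sq lt_qp)).
Qed.

Lemma measurable_on_first_geodesic e :
  measurable [set w | on_first_geodesic rank (env^~ w) x e].
Proof.
rewrite on_first_geodesic_eventE; apply: countable_bigcup_measurable => p _.
apply: measurableI; first exact: measurable_minimal_path_event.
apply: countable_bigcap_measurable => q _.
exact/measurableC/measurable_minimal_path_event.
Qed.

End FirstGeodesicEvent.

Section Probability.
Context (R : realType) d (T : measurableType d) (P : probability T R).
Implicit Types (A B G : set T) (F : (set T)^nat).

Lemma probability_fine A : measurable A -> P A = (fine (P A))%:E.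
Proof. by move=> mA; rewrite fineK // fin_num_measure. Qed.

Lemma indep_setC G A : measurable G -> measurable A ->
  P (G `&` A) = (P G * P A)%E -> P (G `&` ~` A) = (P G * P (~` A))%E.
Proof.
move=> mG mA GA.
have GnA : P (G `\` A) = (P G - P (G `&` A))%E.
  by apply: measureD => //; apply: le_lt_trans (probability_le1 P mG) _; apply: ltry.
rewrite -setDE GnA GA probability_setC // (probability_fine mG) (probability_fine mA).
by rewrite -!EFinM -!EFinB mulrBr mulr1.
Qed.

Lemma indep_bigcup G F : measurable G -> (forall k, measurable (F k)) ->
  trivIset setT F -> (forall k, P (G `&` F k) = (P G * P (F k))%E) ->
  P (G `&` \bigcup_k F k) = (P G * P (\bigcup_k F k))%E.
Proof.
move=> mG mF tF GF; rewrite setI_bigcupr !measure_bigcup //; last 2 first.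
- by move=> k _; apply: measurableI.
- exact: trivIset_setIl.
rewrite (probability_fine mG) -nneseriesZl //.
by apply: eq_eseriesr => k _; rewrite -probability_fine //; exact (GF k).
Qed.

Lemma indep_sigma_generated G (C : set_system T) : measurable G -> setI_closed C ->
  (forall A, C A -> measurable A /\ P (G `&` A) = (P G * P A)%E) ->
  forall A, <<s C >> A -> measurable A /\ P (G `&` A) = (P G * P A)%E.
Proof.
move=> mG closedC indepC.
apply: (@dynkin_induction _ (g_sigma_algebraType C)) => //.
- by rewrite setIT probability_setT mule1.
- by move=> A _ [mA GA]; split; [apply: measurableC | apply: indep_setC].
- by move=> F _ tF GF; split; [apply: bigcupT_measurable => k; case: (GF k) |
    apply: indep_bigcup => // k; case: (GF k)].
Qed.

Lemma prob_le_cond G A B : measurable G -> measurable A -> measurable B ->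
  G `&` B `<=` A -> A `\` G `<=` B -> P (G `&` B) = (P G * P B)%E -> (0 < P A)%E ->
  (P G <= P (G `&` A) * (P A)^-1)%E.
Proof.
move=> mG mA mB GBA AGB GB PA_gt0.
have mGA : measurable (G `&` A) by apply: measurableI.
have mAG : measurable (A `\` G) by apply: measurableD.
have mBG : measurable (B `\` G) by apply: measurableD.
have GB_le : (P (G `&` B) <= P (G `&` A))%E.
  apply: le_measure; rewrite ?inE //; first exact: measurableI.
  by move=> w [Gw Bw]; split=> //; apply: GBA.
have AG_le : (P (A `\` G) <= P (B `\` G))%E.
  by apply: le_measure; rewrite ?inE // => w [Aw nGw]; split; first apply: AGB.
have PA : P A = (P (A `\` G) + P (G `&` A))%E by rewrite setIC; apply: measureDI.
have PBG : P (B `\` G) = (P B - P (G `&` B))%E.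
  rewrite setIC; apply: measureD => //.
  by apply: le_lt_trans (probability_le1 P mB) _; apply: ltry.
have G_le1 := probability_le1 P mG.
have G_ge0 : (0 <= P G)%E := measure_ge0 P G.
move: GB GB_le AG_le PA PBG G_le1 G_ge0 PA_gt0.
rewrite (probability_fine mG) (probability_fine mA) (probability_fine mB).
rewrite (probability_fine mGA) (probability_fine mAG) (probability_fine mBG).
rewrite (probability_fine (measurableI _ _ mG mB)).
rewrite -!EFinM -EFinB -!EFinD !lee_fin !lte_fin.
move=> -[GB] GB_le AG_le [PA] [PBG] G_le1 G_ge0 PA_gt0.
rewrite inver gt_eqF // -EFinM lee_fin ler_pdivlMr // PA.
set g := fine (P G); set a := fine (P (G `&` A)); set b := fine (P B).
rewrite PBG GB in AG_le; rewrite GB in GB_le.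
have : 0 <= (1 - g) * (a - g * b) by rewrite mulr_ge0 // subr_ge0.
have : g * (fine (P (A `\` G)) - (b - g * b)) <= 0 by rewrite mulr_ge0_le0 // subr_le0.
nra.
Qed.

End Probability.

Section EdgeIndependence.
Context (R : realType) (n : nat) d (Omega : measurableType d) (P : probability Omega R).
Variables (tau : edge n -> Omega -> R) (e : edge n).
Hypotheses (tau_meas : forall f, measurable_fun setT (tau f))
  (tau_indep : iid_indep P tau).

Definition cylinders_off_edge : set_system Omega :=
  [set C | exists (S : {fset edge n}) (B : edge n -> set R),
    [/\ e \notin S, forall f, measurable (B f) &
        C = \bigcap_(f in [set` S]) tau f @^-1` B f]].

Lemma measurable_tau_preimage f B : measurable B -> measurable (tau f @^-1` B).
Proof. by move=> mB; rewrite -[X in measurable X]setTI; apply: tau_meas. Qed.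

Lemma measurable_cylinder_off_edge C : cylinders_off_edge C -> measurable C.
Proof.
move=> [S [B [_ mB ->]]]; apply: fin_bigcap_measurable => [|f _].
  exact: finite_fset.
exact: measurable_tau_preimage.
Qed.

Lemma cylinders_off_edge_setI_closed : setI_closed cylinders_off_edge.
Proof.
move=> _ _ [S1 [B1 [eS1 mB1 ->]]] [S2 [B2 [eS2 mB2 ->]]].
exists (S1 `|` S2)%fset, (fun f => (if f \in S1 then B1 f else setT) `&`
                               (if f \in S2 then B2 f else setT)); split.
- by rewrite !inE negb_or eS1 eS2.
- by move=> f; apply: measurableI; case: ifP.
apply/seteqP; split => w /=.
  move=> [h1 h2] f /=; rewrite !inE => /orP [fS|fS].
    split; first by rewrite fS; exact: h1.
    by case: ifP => // fS'; exact: h2.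
  split; last by rewrite fS; exact: h2.
  by case: ifP => // fS'; exact: h1.
move=> h; split => f /= fS.
  by have [] := h f; rewrite /= ?inE ?fS //= => + _; rewrite fS.
by have [] := h f; rewrite /= ?inE ?fS ?orbT //= => _; rewrite fS.
Qed.

Lemma indep_cylinder_off_edge B C : measurable B -> cylinders_off_edge C ->
  P (tau e @^-1` B `&` C) = (P (tau e @^-1` B) * P C)%E.
Proof.
move=> mB [S [BS [eS mBS ->]]].
pose B' f := if f == e then B else BS f.
have mB' f : measurable (B' f) by rewrite /B'; case: eqP.
rewrite tau_indep // (_ : _ `&` _ = \bigcap_(f in [set` (e |` S)%fset]) tau f @^-1` B' f).
  rewrite tau_indep // big_fsetU1 //= /B' eqxx; congr (_ * _)%E.
  by apply: eq_big_seq => f fS; case: eqP => // fe; move: eS; rewrite -fe fS.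
apply/seteqP; split => w /=.
  move=> [Bw BSw] f /=; rewrite !inE /B' => /orP [/eqP -> | fS]; first by rewrite eqxx.
  by case: eqP => [fe|_]; [move: eS; rewrite -fe fS | exact: BSw].
move=> h; split; first by have := h e; rewrite /B' eqxx; apply; rewrite /= !inE eqxx.
move=> f fS; have := h f; rewrite /B'; case: eqP => [fe|_].
  by move: eS; rewrite -fe fS.
by apply; rewrite /= !inE fS orbT.
Qed.

Lemma indep_edge_cylinder_sigma B A : measurable B -> <<s cylinders_off_edge >> A ->
  measurable A /\ P (tau e @^-1` B `&` A) = (P (tau e @^-1` B) * P A)%E.
Proof.
move=> mB; apply: indep_sigma_generated.
- exact: measurable_tau_preimage.
- exact: cylinders_off_edge_setI_closed.
- move=> C cC; split; first exact: measurable_cylinder_off_edge.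
  exact: indep_cylinder_off_edge.
Qed.

Lemma measurable_set_weight_off_edge r f :
  measurable_fun setT
    (fun w : g_sigma_algebraType cylinders_off_edge => set_weight (tau^~ w) e r f).
Proof.
rewrite /set_weight; case: eqP => [_|/eqP fe]; first exact: measurable_cst.
move=> _ Y mY; apply: sub_sigma_algebra.
exists [fset f]%fset, (fun _ => Y); split => //; first by rewrite inE eq_sym.
apply/seteqP; split => w /=; first by move=> [_ Yw] f' /=; rewrite inE => /eqP ->.
by move=> Yw; split => //; apply: Yw; rewrite /= inE.
Qed.

End EdgeIndependence.

Theorem lemma2p1 (R : realType) (n : nat) (hn : (2 <= n)%N)
  (dsp : measure_display) (Omega : measurableType dsp) (P : probability Omega R)
  (mu : probability R R) (tau : edge n -> Omega -> R)
  (tau_meas : forall e, measurable_fun setT (tau e))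
  (tau_nonneg : forall e w, 0 <= tau e w)
  (tau_law : forall e (A : set R), measurable A -> P (tau e @^-1` A) = mu A)
  (tau_indep : iid_indep P tau)
  (standing : (ess_inf_law mu = 0 -> (distF mu (ess_inf_law mu) < (@p_c R n)%:E)%E) /\
              (0 < ess_inf_law mu -> (distF mu (ess_inf_law mu) < (@vec_p_c R n)%:E)%E))
  (rank : lpath n -> nat)
  (rank_inj : forall p q, self_avoiding p -> self_avoiding q -> rank p = rank q -> p = q)
  (x : vertex n) (t : R) (ht : 0 < t) (e : edge n)
  (hpos : (0 < P [set w | exists p, first_geodesic rank (tau^~ w) x p /\ e \in path_edges p])%E) :
  (P [set w | (tau e w <= t)%R] <=
   P ([set w | (tau e w <= t)%R] `&`
      [set w | exists p, first_geodesic rank (tau^~ w) x p /\ e \in path_edges p])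
   * (P [set w | exists p, first_geodesic rank (tau^~ w) x p /\ e \in path_edges p])^-1)%E.
Proof.
have tau_t_ge0 f w : 0 <= set_weight (tau^~ w) e t f.
  by apply: set_weight_ge0 => //; apply: ltW.
have mLe : measurable [set r : R | r <= t].
  by rewrite -[X in measurable X]setTI; apply: measurable_fun_le => //; apply: measurable_cst.
have mB_off_e := measurable_on_first_geodesic rank x
  (measurable_set_weight_off_edge (tau:=tau) (e:=e) t) tau_t_ge0 e.
have [mB GB] := indep_edge_cylinder_sigma tau_meas tau_indep mLe mB_off_e.
apply: prob_le_cond GB hpos => //.
- exact: measurable_tau_preimage.
- exact: measurable_on_first_geodesic.
- move=> w [tau_le [p [first_p ep]]]; exists p; split=> //.
  apply: first_geodesic_lower_weight first_p ep => [f|f|f /set_weight_off->|] //.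
  by rewrite set_weight_at.
- move=> w [[p [first_p ep]] /negP]; rewrite -ltNge => tau_gt; exists p; split=> //.
  apply: first_geodesic_lower_weight first_p ep => [f|f|f /set_weight_off|] //.
  by rewrite set_weight_at ltW.
Qed.
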